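(* Let $G$ be a connected graph with minimum degree $\delta(G)\ge 3$, and let $D\subseteq V(G)$ be a connected $3$-dominating set of $G$. Then $px_3(G)\le px_3(G[D])+1$. Moreover, this bound is tight (there are such graphs $G$ and sets $D$ with equality).
   Context: All graphs are finite, simple and undirected. For $D\subseteq V(G)$, $G[D]$ is the induced subgraph. A set $D$ is a $3$-dominating set of $G$ if every vertex of $V(G)\setminus D$ is adjacent to at least $3$ distinct vertices of $D$; it is connected if $G[D]$ is connected. An edge-coloring assigns colors to edges, adjacent edges being allowed to share a color. A tree in an edge-colored graph is proper if no two adjacent edges of it receive the same color. An edge-coloring of a connected graph $H$ is a $3$-proper coloring if for every $3$-element set $S\subseteq V(H)$ there is a proper tree in $H$ containing all vertices of $S$; $px_3(H)$ is the minimum number of colors in a $3$-proper coloring of $H$. *)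

From Stdlib Require Import ClassicalEpsilon.
From mathcomp Require Import all_boot.
Set Implicit Arguments. Unset Strict Implicit. Unset Printing Implicit Defensive.

Section Defs.
Variable T : finType.

Definition simple_graph (e : rel T) : Prop := symmetric e /\ irreflexive e.

(* edge relation of the graph with vertex set V induced by r: H = (V, induced V r) *)
Definition induced (V : {set T}) (r : rel T) : rel T :=
  fun x y => [&& x \in V, y \in V & r x y].

Definition connectedb (V : {set T}) (r : rel T) : bool :=
  [forall x in V, forall y in V, connect (induced V r) x y].

Definition min_degree_ge (e : rel T) (d : nat) : Prop :=
  forall x : T, d <= #|[set y | e x y]|.

Definition three_dominating (e : rel T) (D : {set T}) : Prop :=
  forall x : T, x \notin D -> 3 <= #|[set y in D | e x y]|.

(* (W, F) is a tree in the graph (V, induced V r), F given as a symmetric set of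
   ordered pairs (each edge {x,y} stored as (x,y) and (y,x)); a tree is a
   connected graph with |W|-1 edges. *)
Definition is_tree_in (V : {set T}) (r : rel T) (W : {set T}) (F : {set T * T}) : bool :=
  [&& [forall p in F, induced V r p.1 p.2],
      [forall p in F, (p.2, p.1) \in F],
      [forall p in F, p.1 \in W],
      W != set0,
      [forall x in W, forall y in W, connect (fun a b => (a, b) \in F) x y]
    & #|F| == (#|W|).-1.*2].

Definition proper_edges k (c : {ffun T * T -> 'I_k}) (F : {set T * T}) : bool :=
  [forall x, forall y, forall z,
     [&& (x, y) \in F, (x, z) \in F & y != z] ==> (c (x, y) != c (x, z))].

Definition three_proper (V : {set T}) (r : rel T) k (c : {ffun T * T -> 'I_k}) : bool :=
  [forall x, forall y, c (x, y) == c (y, x)] &&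
  [forall S : {set T}, (S \subset V) && (#|S| == 3) ==>
     [exists W : {set T}, exists F : {set T * T},
        [&& is_tree_in V r W F, S \subset W & proper_edges c F]]].

Definition has_3proper (V : {set T}) (r : rel T) (k : nat) : bool :=
  [exists c : {ffun T * T -> 'I_k}, three_proper V r c].

(* px_3 of the graph (V, induced V r): the least number of colours of a
   3-proper colouring (0 by convention if none exists, which never happens
   for the connected graphs considered). *)
Definition px3 (V : {set T}) (r : rel T) : nat :=
  match excluded_middle_informative (exists k, has_3proper V r k) with
  | left h => ex_minn h
  | right _ => 0
  end.

End Defs.

From Stdlib Require Import ClassicalEpsilon.
From mathcomp Require Import all_boot zify.
Set Implicit Arguments. Unset Strict Implicit. Unset Printing Implicit Defensive.

(** Upper bound: extend a 3-proper colouring of [G[D]] by one new colour on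
    every edge not inside [D].  Since every vertex outside [D] has three
    neighbours in [D], any three vertices [S] have distinct representatives
    in [D], a vertex of [D] representing itself.  A properly coloured tree of
    [G[D]] through the representatives, with the vertices of [S \ D] hung on
    their representatives as leaves, is a tree through [S]; it is proper
    because every vertex meets at most one of the new leaf edges.

    Tightness: let [G] be the join of a triangle [D] with 17 independent
    vertices.  A path of [D] coloured with two colours gives
    [px3(G[D]) <= 2].  In a 2-colouring of [G] three outer vertices [S] see
    the triangle in the same colours (pigeonhole), so a proper tree on [W]
    through [S] has at most one edge at [S] per triangle vertex and at most
    two edges at every other vertex: [2(|W| - 1) <= 3 + 2(|W| - 3)], which is
    absurd. *)

Section Trees.
Variable T : finType.
Implicit Types (V W X : {set T}) (r : rel T) (F : {set T * T}).

Local Notation adj F := (fun a b : T => (a, b) \in F).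

Lemma induced_sym V r : symmetric r -> symmetric (induced V r).
Proof. by move=> rsym x y; rewrite /induced andbCA rsym. Qed.

Lemma connect_exit (e : rel T) (A : {set T}) x y :
  connect e x y -> x \in A -> y \notin A ->
  exists a b, [/\ a \in A, b \notin A & e a b].
Proof.
case/connectP=> p; elim: p x => [|z p IH] x /=; first by move=> _ -> ->.
case/andP=> exz zp yE xA yA; case: (boolP (z \in A)) => zA.
  exact: IH zp yE zA yA.
by exists x, z.
Qed.

Lemma connectedb_hub V r v : symmetric r ->
  {in V, forall x, connect (induced V r) x v} -> connectedb V r.
Proof.
move=> rsym hub; apply/forall_inP => x xV; apply/forall_inP => y yV.
by apply: connect_trans (hub x xV) _; rewrite (sym_connect_sym (induced_sym V rsym)) hub.
Qed.

Lemma treeP V r W F :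
  reflect [/\ {in F, forall p, induced V r p.1 p.2},
              {in F, forall p, (p.2, p.1) \in F},
              {in F, forall p, p.1 \in W},
              W != set0
            & {in W &, forall x y, connect (adj F) x y} /\ #|F| = (#|W|).-1.*2]
          (is_tree_in V r W F).
Proof.
apply: (iffP and5P) => [[/forall_inP Find /forall_inP Fsym /forall_inP FW W0]|].
  case/andP=> /forall_inP Fconn /eqP cardF; split=> //; split=> // x y xW yW.
  exact: forall_inP (Fconn x xW) y yW.
case=> Find Fsym FW W0 [Fconn cardF]; split=> //; try exact/forall_inP.
apply/andP; split; last exact/eqP.
by apply/forall_inP => x xW; apply/forall_inP => y yW; apply: Fconn.
Qed.

Lemma tree_endpoints V r W F p :
  is_tree_in V r W F -> p \in F -> (p.1 \in W) && (p.2 \in W).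
Proof. by case/treeP=> _ Fsym FW _ _ pF; rewrite FW // (FW _ (Fsym _ pF)). Qed.

Lemma tree_set1 V r x : is_tree_in V r [set x] set0.
Proof.
apply/treeP; split=> [p|p|p||]; rewrite ?inE //; first by apply/set0Pn; exists x; rewrite inE.
by split=> [y z /set1P-> /set1P->|]; rewrite ?connect0 ?cards0 ?cards1.
Qed.

Lemma is_tree_inW V V' r W F :
  V \subset V' -> is_tree_in V r W F -> is_tree_in V' r W F.
Proof.
move=> VV' /treeP[Find Fsym FW W0 Fconn]; apply/treeP; split=> // p /Find /and3P[p1 p2 e].
by rewrite /induced !(subsetP VV') ?e.
Qed.

Lemma tree_vertices_sub V r W F :
  is_tree_in V r W F -> 1 < #|W| -> W \subset V.
Proof.
move=> /treeP[Find _ _ _ [Fconn _]] W2; apply/subsetP => w wW.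
have [w' /setD1P[w'w w'W]] : exists w', w' \in W :\ w.
  by apply/card_gt0P; move: W2; rewrite (cardsD1 w W) wW; lia.
case/connectP: (Fconn w w' wW w'W) => -[_ /= ww'|z p /= /andP[/Find /and3P[] //]].
by rewrite ww' eqxx in w'w.
Qed.

Definition leaf_edges X (g : T -> T) : {set T * T} :=
  [set (x, g x) | x in X] :|: [set (g x, x) | x in X].

Lemma leaf_edgesP X g x y :
  reflect (x \in X /\ y = g x \/ y \in X /\ x = g y) ((x, y) \in leaf_edges X g).
Proof.
rewrite inE; apply: (iffP orP) => [[]|[[xX ->]|[yX ->]]].
- by case/imsetP => z zX [-> ->]; left.
- by case/imsetP => z zX [-> ->]; right.
- by left; apply/imsetP; exists x.
- by right; apply/imsetP; exists y.
Qed.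

Lemma card_leaf_edges X g :
  {in X, forall x, g x \notin X} -> #|leaf_edges X g| = (#|X|).*2.
Proof.
move=> gX; rewrite cardsU !card_imset => [|x y [_ ->] //|x y [->] //].
suff -> : [set (x, g x) | x in X] :&: [set (g x, x) | x in X] = set0.
  by rewrite cards0 subn0 addnn.
apply/setP => -[a b]; rewrite !inE; apply/negP => /andP[].
by case/imsetP => x xX [-> ->] /imsetP[y yX [xE _]]; move: (gX y yX); rewrite -xE xX.
Qed.

Lemma card_setU_leaf_edges W F X g :
  [disjoint X & W] -> {in F, forall p, (p.1 \in W) && (p.2 \in W)} ->
  {in X, forall x, g x \in W} -> #|F :|: leaf_edges X g| = #|F| + (#|X|).*2.
Proof.
move=> XW FW gXW; rewrite cardsU -(card_leaf_edges (g := g)); last first.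
  by move=> x /gXW; apply: contraTN => /(disjointFr XW) ->.
suff -> : F :&: leaf_edges X g = set0 by rewrite cards0 subn0.
apply/setP => -[x y]; rewrite in_setI in_set0; apply/negP => /andP[/FW/andP[/= xW yW]].
by case/leaf_edgesP => -[zX _]; rewrite ?(disjointFr XW zX) in xW yW.
Qed.

Lemma tree_leaves V r W F X g :
  symmetric r -> is_tree_in V r W F -> [disjoint X & W] ->
  {in X, forall x, induced V r x (g x) && (g x \in W)} ->
  is_tree_in V r (W :|: X) (F :|: leaf_edges X g).
Proof.
move=> rsym trF XW gX; have Fends := tree_endpoints trF.
have gXW x : x \in X -> g x \in W by case/gX/andP.
case/treeP: trF => Find Fsym _ W0 [Fconn cardF].
set F' := F :|: _.
have F'sym p : p \in F' -> (p.2, p.1) \in F'.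
  case: p => x y /setUP[/Fsym yx|/leaf_edgesP xy]; rewrite /F' inE ?yx //=.
  by apply/orP; right; apply/leaf_edgesP; case: xy => xy; [right|left].
have /set0Pn[w0 w0W] := W0.
have hub v : v \in W :|: X -> connect (adj F') v w0.
  have FF' : subrel (adj F) (connect (adj F')).
    by move=> u u' uu'; apply: connect1; rewrite /F' inE uu'.
  case/setUP => [vW|vX]; first exact: connect_sub FF' _ _ (Fconn _ _ vW w0W).
  apply: connect_trans (connect1 (_ : adj F' v (g v))) _.
    by rewrite /F' inE; apply/orP; right; apply/leaf_edgesP; left.
  exact: connect_sub FF' _ _ (Fconn _ _ (gXW _ vX) w0W).
apply/treeP; split.
- move=> [x y] /setUP[/Find //|/leaf_edgesP[[xX ->]|[yX ->]]].
    by case/andP: (gX x xX).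
  by case/andP: (gX y yX); rewrite (induced_sym _ rsym).
- exact: F'sym.
- move=> [x y] /setUP[/Fends/andP[]|/leaf_edgesP[[xX _]|[yX ->]]]; rewrite inE ?xX ?gXW ?orbT //.
  by move=> ->.
- by apply/set0Pn; exists w0; rewrite inE w0W.
split.
  move=> x y xWX yWX; apply: connect_trans (hub x xWX) _.
  have adjsym : symmetric (adj F') by move=> a b; apply/idP/idP => /F'sym.
  by rewrite (sym_connect_sym adjsym) hub.
have XW0 : W :&: X = set0 by rewrite setIC disjoint_setI0.
rewrite /F' (card_setU_leaf_edges XW) // cardF cardsU XW0 cards0 subn0.
move: (card_gt0 W); rewrite W0.
by move: #|W| #|X| => a b; lia.
Qed.

Lemma connected_spanning_tree V r :
  symmetric r -> connectedb V r -> V != set0 -> exists F, is_tree_in V r V F.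
Proof.
move=> rsym /forall_inP Vconn /set0Pn[v vV].
pose P W := (W \subset V) && [exists F, is_tree_in V r W F].
have P1 : P [set v] by rewrite /P sub1set vV; apply/existsP; exists set0; apply: tree_set1.
case: (arg_maxnP (fun W => #|W|) P1) => W /andP[WV /existsP[F trF]] maxW.
have [WV'|] := eqVneq W V; first by exists F; rewrite -{2}WV'.
rewrite eqEsubset WV /= => /subsetPn[y yV yW].
have /set0Pn[w wW] : W != set0 by case/treeP: trF.
have [a [b [aW bW ab]]] :=
  connect_exit (forall_inP (Vconn w (subsetP WV w wW)) y yV) wW yW.
have : P (W :|: [set b]).
  have /and3P[_ bV _] := ab.
  rewrite /P subUset WV sub1set bV; apply/existsP.
  exists (F :|: leaf_edges [set b] (fun=> a)).
  apply: tree_leaves => //; first by rewrite disjoints1.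
  by move=> _ /set1P->; rewrite (induced_sym _ rsym) ab aW.
by move/maxW; rewrite setUC cardsU1 bW; lia.
Qed.

End Trees.

Section Colourings.
Variable T : finType.
Implicit Types (V X : {set T}) (r : rel T) (F N : {set T * T}).

Lemma properP k (c : {ffun T * T -> 'I_k}) F :
  reflect (forall x y z, (x, y) \in F -> (x, z) \in F -> y != z -> c (x, y) != c (x, z))
          (proper_edges c F).
Proof.
apply: (iffP forallP) => [h x y z xy xz yz | h x].
  by have /forallP/(_ z)/implyP := forallP (h x) y; rewrite xy xz yz; apply.
by apply/forallP => y; apply/forallP => z; apply/implyP => /and3P[]; apply: h.
Qed.

Lemma three_properP V r k (c : {ffun T * T -> 'I_k}) :
  reflect ((forall x y, c (x, y) = c (y, x)) /\
           forall S : {set T}, S \subset V -> #|S| = 3 ->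
             exists (W : {set T}) (F : {set T * T}),
               [/\ is_tree_in V r W F, S \subset W & proper_edges c F])
          (three_proper V r c).
Proof.
apply: (iffP andP) => [[/forallP csym /forallP ctree] | [csym ctree]]; split.
- by move=> x y; apply/eqP; apply: (forallP (csym x) y).
- move=> S SV S3; have /implyP := ctree S; rewrite SV S3 eqxx => /(_ isT).
  by case/existsP => W /existsP[F /and3P[]]; exists W, F.
- by apply/forallP => x; apply/forallP => y; rewrite csym.
apply/forallP => S; apply/implyP => /andP[SV /eqP S3].
have [W [F [trF SW prF]]] := ctree S SV S3.
by apply/existsP; exists W; apply/existsP; exists F; rewrite trF SW prF.
Qed.

Lemma proper_edgesS k (c : {ffun T * T -> 'I_k}) F N :
  N \subset F -> proper_edges c F -> proper_edges c N.
Proof.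
move=> /subsetP NF /properP prF; apply/properP => x y z xy xz; exact: prF (NF _ xy) (NF _ xz).
Qed.

Lemma proper_edgesU k (c : {ffun T * T -> 'I_k}) F N :
  proper_edges c F -> proper_edges c N ->
  (forall x y z, (x, y) \in F -> (x, z) \in N -> c (x, y) != c (x, z)) ->
  proper_edges c (F :|: N).
Proof.
move=> /properP prF /properP prN cross; apply/properP => x y z.
case/setUP => xy /setUP[] xz yz; first exact: prF.
- exact: cross.
- by rewrite eq_sym; apply: cross.
- exact: prN.
Qed.

Lemma proper_leaf_edges k (c : {ffun T * T -> 'I_k}) X g :
  {in X, forall x, g x \notin X} ->
  {in X &, forall x y, g x = g y -> c (g x, x) = c (g y, y) -> x = y} ->
  proper_edges c (leaf_edges X g).
Proof.
move=> gX ginj; apply/properP => x y z.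
case/leaf_edgesP => [[xX ->]|[yX ->]] /leaf_edgesP[[xX' ->]|[zX xE]].
- by rewrite eqxx.
- by move: (gX z zX); rewrite -xE xX.
- by move: (gX y yX); rewrite xX'.
apply: contra => /eqP cyz; apply/eqP; apply: (ginj y z) => //.
by rewrite -xE.
Qed.

Lemma card_proper_edges_le k (c : {ffun T * T -> 'I_k}) F (A : {set T}) :
  proper_edges c F -> {in F, forall p, p.1 \in A} -> #|F| <= #|A| * k.
Proof.
move=> /properP prF FA.
have inj : {in F &, injective (fun p => (p.1, c p))}.
  move=> [x y] [x' z] xy xz /= [xx' cyz]; subst x'.
  case: (eqVneq y z) => [-> // | yz].
  by move: (prF x y z xy xz yz); rewrite cyz eqxx.
have -> : #|A| * k = #|setX A [set: 'I_k]| by rewrite cardsX cardsT card_ord.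
rewrite -(card_in_imset inj); apply/subset_leq_card/subsetP => _ /imsetP[p pF ->].
by rewrite in_setX FA ?in_setT.
Qed.

Definition pair_colouring : {ffun T * T -> 'I_#|{set T}|} :=
  [ffun p => enum_rank [set p.1; p.2]].

Lemma proper_pair_colouring F : proper_edges pair_colouring F.
Proof.
apply/properP => x y z _ _; apply: contra; rewrite !ffunE => /eqP/enum_rank_inj exy.
have /set2P[yx|->//] : y \in [set x; z] by rewrite -exy set22.
have /set2P[zx|->//] : z \in [set x; y] by rewrite exy set22.
by rewrite yx zx.
Qed.

Lemma has_3proper_connected V r :
  symmetric r -> connectedb V r -> has_3proper V r #|{set T}|.
Proof.
move=> rsym Vconn; apply/existsP; exists pair_colouring; apply/three_properP; split.
  by move=> x y; rewrite !ffunE /= setUC.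
move=> S SV S3; have [F trF] : exists F, is_tree_in V r V F.
  apply: connected_spanning_tree => //; apply/set0Pn.
  have /card_gt0P[s sS] : 0 < #|S| by rewrite S3.
  by exists s; apply: (subsetP SV).
by exists V, F; rewrite trF SV proper_pair_colouring.
Qed.

Lemma px3_spec V r k :
  has_3proper V r k -> has_3proper V r (px3 V r) /\ px3 V r <= k.
Proof.
move=> hk; rewrite /px3; case: excluded_middle_informative => [ex|]; last by case; exists k.
by case: ex_minnP => m hm /(_ k hk).
Qed.

End Colourings.

Section Domination.
Variable T : finType.
Implicit Types (D S : {set T}) (e : rel T) (F N : {set T * T}).

Lemma dominating_representatives e D S :
  (forall x, x \in S -> x \notin D -> #|S| <= #|[set y in D | e x y]|) ->
  exists f : T -> T, [/\ {in S &, injective f}, {in S :&: D, forall x, f x = x}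
                       & {in S :\: D, forall x, (f x \in D) && e x (f x)}].
Proof.
move: {2}#|S :\: D| (erefl #|S :\: D|) => n; elim: n S => [|n IH] S nS dom.
  by exists id; split=> // x; rewrite (cards0_eq nS) inE.
have [a aSD] : exists a, a \in S :\: D by apply/card_gt0P; rewrite nS.
have /setDP[aS aD] := aSD.
have nS' : #|(S :\ a) :\: D| = n.
  have -> : (S :\ a) :\: D = (S :\: D) :\ a by rewrite setDDl setUC -setDDl.
  by move: nS; rewrite (cardsD1 a) aSD; lia.
have dom' x : x \in S :\ a -> x \notin D -> #|S :\ a| <= #|[set y in D | e x y]|.
  move=> /setD1P[_ xS] xD; apply: leq_trans (dom x xS xD).
  by rewrite (cardsD1 a S) aS.
have [f [finj fD fN]] := IH _ nS' dom'.
(* [a] sees at least [#|S|] vertices of [D]; the rest of [S] uses fewer. *)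
have [y] : exists y, y \in [set y in D | e a y] :\: f @: (S :\ a).
  apply/card_gt0P; rewrite cardsD.
  have := subset_leq_card (subsetIr [set y in D | e a y] (f @: (S :\ a))).
  have := leq_imset_card f (S :\ a); have := dom a aS aD.
  by rewrite (cardsD1 a S) aS; lia.
rewrite !inE => /andP[yf /andP[yD ay]].
have fS x : x \in S -> x != a -> f x \in f @: (S :\ a).
  by move=> xS xa; apply/imsetP; exists x; rewrite // !inE xa xS.
exists (fun x => if x == a then y else f x); split.
- move=> x z xS zS /=.
  case: eqP => [->|/eqP xa]; case: eqP => [->|/eqP za] //.
  + by move=> yz; rewrite yz fS in yf.
  + by move=> zy; rewrite -zy fS in yf.
  by apply: finj; rewrite !inE ?xa ?za ?xS ?zS.
- move=> x /setIP[xS xD] /=; case: eqP => [xa|_]; first by rewrite -xa xD in aD.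
  by apply: fD; rewrite !inE xS xD !andbT; apply: contraNneq aD => <-.
move=> x /setDP[xS xD] /=; case: eqP => [->|/eqP xa]; first by rewrite yD ay.
by apply: fN; rewrite !inE xa xS xD.
Qed.

Definition extend_colouring k (c : {ffun T * T -> 'I_k}) D : {ffun T * T -> 'I_k.+1} :=
  [ffun p => if (p.1 \in D) && (p.2 \in D) then widen_ord (leqnSn k) (c p) else ord_max].

Lemma proper_extend_colouring k (c : {ffun T * T -> 'I_k}) D F N :
  {in F, forall p, (p.1 \in D) && (p.2 \in D)} ->
  {in N, forall p, ~~ ((p.1 \in D) && (p.2 \in D))} ->
  proper_edges c F -> proper_edges (extend_colouring c D) N ->
  proper_edges (extend_colouring c D) (F :|: N).
Proof.
move=> FD ND /properP prF prN; apply: proper_edgesU => //.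
  apply/properP => x y z xy xz yz; rewrite !ffunE (FD _ xy) (FD _ xz).
  by rewrite -val_eqE /= val_eqE prF.
move=> x y z xy xz; rewrite !ffunE (FD _ xy) (negbTE (ND _ xz)).
by rewrite -val_eqE /= neq_ltn ltn_ord.
Qed.

Lemma three_proper_extend e D k (c : {ffun T * T -> 'I_k}) :
  simple_graph e -> three_dominating e D -> three_proper D e c ->
  three_proper [set: T] e (extend_colouring c D).
Proof.
move=> [esym _] dom /three_properP[csym ctree]; apply/three_properP; split.
  by move=> x y; rewrite !ffunE /= andbC csym.
move=> S _ S3.
have domS x : x \in S -> x \notin D -> #|S| <= #|[set y in D | e x y]|.
  by move=> _ xD; rewrite S3 dom.
have [f [finj fD fN]] := dominating_representatives domS.
set X := S :\: D.
have fSD : f @: S \subset D.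
  apply/subsetP => _ /imsetP[x xS ->]; have [xD|xD] := boolP (x \in D).
    by rewrite fD // inE xS.
  by have /fN/andP[] : x \in X by rewrite inE xD xS.
have [W [F [trF fSW prF]]] := ctree _ fSD (etrans (card_in_imset finj) S3).
have WD : W \subset D.
  apply: tree_vertices_sub trF _; apply: leq_trans (subset_leq_card fSW).
  by rewrite card_in_imset // S3.
have fXW x : x \in X -> f x \in W.
  by case/setDP=> xS _; apply: (subsetP fSW); apply: imset_f.
exists (W :|: X), (F :|: leaf_edges X f); split.
- apply: tree_leaves => //; first exact: is_tree_inW (subsetT D) trF.
    rewrite disjoints_subset; apply/subsetP => x /setDP[_ xD].
    by rewrite inE; apply: contra xD => /(subsetP WD).
  by move=> x xX; have /andP[_ exf] := fN x xX; rewrite /induced !inE exf fXW.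
- apply/subsetP => x xS; rewrite inE; have [xD|xD] := boolP (x \in D).
    by rewrite -(fD x) ?inE ?xS ?xD // (subsetP fSW) ?imset_f.
  by rewrite !inE xS xD orbT.
apply: proper_extend_colouring prF _.
- by move=> p /(tree_endpoints trF)/andP[/(subsetP WD) -> /(subsetP WD) ->].
- move=> [x y] /leaf_edgesP[[/setDP[_ xD] _]|[/setDP[_ yD] _]] /=.
    by rewrite (negbTE xD).
  by rewrite (negbTE yD) andbF.
apply: proper_leaf_edges.
  by move=> x xX; have /andP[fxD _] := fN x xX; rewrite inE fxD.
by move=> x y /setDP[xS _] /setDP[yS _] fxy _; apply: finj.
Qed.

Lemma px3_dominating_le e D :
  simple_graph e -> three_dominating e D -> connectedb D e ->
  px3 [set: T] e <= px3 D e + 1.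
Proof.
move=> eG dom Dconn.
have [/existsP[c cD] _] := px3_spec (has_3proper_connected eG.1 Dconn).
have extG : has_3proper [set: T] e (px3 D e).+1.
  by apply/existsP; exists (extend_colouring c D); apply: three_proper_extend.
by rewrite addn1; case: (px3_spec extG).
Qed.

End Domination.

Lemma fibre_pigeonhole (A B : finType) (f : A -> B) m :
  m * #|B| < #|A| ->
  exists2 S : {set A}, #|S| = m.+1 & {in S &, forall a a', f a = f a'}.
Proof.
move=> mBA; have [b mb] : exists b, m < #|[set a | f a == b]|.
  apply/existsP; apply: contraLR mBA => /existsPn small; rewrite -leqNgt.
  have -> : #|A| = \sum_(b : B) #|[set a | f a == b]|.
    rewrite -sum1_card (partition_big f predT) //=; apply: eq_bigr => b _.
    by rewrite -sum1_card; apply: eq_bigl => a; rewrite inE.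
  rewrite mulnC -sum_nat_const; apply: leq_sum => b _; rewrite leqNgt; exact: small.
have : 0 < #|[set S : {set A} | S \subset [set a | f a == b] & #|S| == m.+1]|.
  by rewrite cards_draws bin_gt0.
case/card_gt0P => S; rewrite inE => /andP[/subsetP Sb /eqP Sm]; exists S => // a a' aS a'S.
by have := Sb a aS; have := Sb a' a'S; rewrite !inE => /eqP-> /eqP->.
Qed.

Section TriangleJoin.
Variable n : nat.
Definition join_vertex : finType := ('I_3 + 'I_n)%type.
Local Notation V := join_vertex.
Local Notation t i := (@Ordinal 3 i isT).

Definition triangle_join : rel V := fun x y =>
  match x, y with
  | inl i, inl j => i != j
  | inr _, inr _ => false
  | _, _ => true
  end.

Definition triangle : {set V} := [set x | if x is inl _ then true else false].

Lemma triangle_join_simple : simple_graph triangle_join.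
Proof.
split; first by move=> [i|i] [j|j] //=; rewrite eq_sym.
by move=> [i|i] //=; rewrite eqxx.
Qed.

Lemma triangle_join_hub (A : {set V}) : inl (t 0) \in A ->
  {in A, forall x, connect (induced A triangle_join) x (inl (t 0))}.
Proof.
move=> hA [i|j] xA; last by apply: connect1; rewrite /induced xA hA.
have [->|i0] := eqVneq i (t 0); first exact: connect0.
by apply: connect1; rewrite /induced xA hA.
Qed.

Lemma triangle_join_connected : connectedb [set: V] triangle_join.
Proof.
by apply: connectedb_hub (triangle_join_simple.1) _; apply: triangle_join_hub; rewrite inE.
Qed.

Lemma triangle_connected : connectedb triangle triangle_join.
Proof.
by apply: connectedb_hub (triangle_join_simple.1) _; apply: triangle_join_hub; rewrite inE.
Qed.

Lemma card_triangle : #|triangle| = 3.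
Proof.
have -> : triangle = inl @: [set: 'I_3].
  by apply/setP => -[i|j]; rewrite !inE ?imset_f //; apply/esym/imsetP => -[].
by rewrite card_imset ?cardsT ?card_ord // => i j [].
Qed.

Lemma triangle_join_min_degree : 2 < n -> min_degree_ge triangle_join 3.
Proof.
move=> n3 [i|j].
  have inr_inj : injective (@inr 'I_3 'I_n) by move=> ? ? [].
  apply: leq_trans n3 _; rewrite -{1}(card_ord n) -cardsT -(card_imset _ inr_inj).
  by apply/subset_leq_card/subsetP => _ /imsetP[j _ ->]; rewrite inE.
by rewrite -[X in X <= _]card_triangle; apply/subset_leq_card/subsetP => -[i|i]; rewrite !inE.
Qed.

Lemma triangle_dominating : three_dominating triangle_join triangle.
Proof.
move=> [i|j]; rewrite inE // => _; rewrite -[X in X <= _]card_triangle.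
by apply/subset_leq_card/subsetP => -[i|i]; rewrite !inE.
Qed.

Definition triangle_colouring : {ffun V * V -> 'I_2} :=
  [ffun p => if (p.1 == inl (t 2)) || (p.2 == inl (t 2)) then ord_max else ord0].

Lemma has_3proper_triangle : has_3proper triangle triangle_join 2.
Proof.
pose X : {set V} := [set inl (t 0); inl (t 2)].
apply/existsP; exists triangle_colouring; apply/three_properP; split.
  by move=> x y; rewrite !ffunE /= orbC.
move=> S ST _; exists ([set inl (t 1)] :|: X), (set0 :|: leaf_edges X (fun=> inl (t 1))).
split.
- apply: tree_leaves; [exact: triangle_join_simple.1 | exact: tree_set1 | |].
    by rewrite disjoint_sym disjoints1 !inE.
  by move=> x /set2P[]->; rewrite /induced !inE.
- apply: subset_trans ST _; apply/subsetP => -[[[|[|[|m]]] ?]|j] //; rewrite !inE //.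
rewrite set0U; apply: proper_leaf_edges => [x _|]; first by rewrite !inE.
by move=> x y /set2P[]-> /set2P[]-> _; rewrite !ffunE //= => /(congr1 val).
Qed.

Lemma card_tree_edges_from_twins k (c : {ffun V * V -> 'I_k}) W F (S : {set V}) :
  is_tree_in [set: V] triangle_join W F -> proper_edges c F ->
  [disjoint S & triangle] -> {in S &, forall x x' i, c (inl i, x) = c (inl i, x')} ->
  #|F :&: [set p | p.1 \in S]| <= 3.
Proof.
case/treeP => Find Fsym _ _ _ /properP prF ST twins.
have toT p : p \in F -> p.1 \in S -> p.2 \in triangle.
  case: p => -[i|j] y /Find /and3P[_ _] /= xy xS.
    by move: (disjointFr ST xS); rewrite inE.
  by case: y xy => [i|j'] //; rewrite inE.
rewrite -[X in _ <= X]card_triangle -(card_in_imset (f := snd)); last first.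
  move=> [x y] [x' y'] /setIP[xyF xS] /setIP[xyF' xS'] /= yy'.
  move: xS xS'; rewrite !inE /= => xS xS'; subst y'; have [-> //|xx'] := eqVneq x x'.
  have := toT _ xyF xS; case: y xyF xyF' => [i|j] xyF xyF'; rewrite inE // => _.
  by move: (prF _ _ _ (Fsym _ xyF) (Fsym _ xyF') xx'); rewrite (twins x x') ?eqxx.
apply/subset_leq_card/subsetP => q /imsetP[p /setIP[pF]]; rewrite inE => pS ->.
exact: toT.
Qed.

Lemma triangle_join_colours_gt2 k (c : {ffun V * V -> 'I_k}) :
  16 < n -> three_proper [set: V] triangle_join c -> 2 < k.
Proof.
move=> n17 /three_properP[_ ctree]; rewrite ltnNge; apply/negP => k2.
pose pattern (j : 'I_n) := [ffun i : 'I_3 => c (inl i, inr j)].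
have [J J3 Jtwins] : exists2 J : {set 'I_n}, #|J| = 3 &
                       {in J &, forall j j', pattern j = pattern j'}.
  apply: fibre_pigeonhole; rewrite card_ffun !card_ord; apply: leq_ltn_trans n17.
  by rewrite -[16]/(2 * 2 ^ 3) leq_mul2l leq_exp2r.
pose S : {set V} := [set inr j | j in J].
have S3 : #|S| = 3 by rewrite card_imset // => ? ? [].
have [W [F [trF SW prF]]] := ctree S (subsetT S) S3.
have fromS : #|F :&: [set p | p.1 \in S]| <= 3.
  apply: card_tree_edges_from_twins trF prF _ _.
    by rewrite disjoints_subset; apply/subsetP => _ /imsetP[j _ ->]; rewrite !inE.
  move=> _ _ /imsetP[j jJ ->] /imsetP[j' j'J ->] i.
  by move/ffunP/(_ i): (Jtwins j j' jJ j'J); rewrite !ffunE.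
have fromWS : #|F :\: [set p | p.1 \in S]| <= #|W :\: S| * k.
  apply: card_proper_edges_le (proper_edgesS (subsetDl _ _) prF) _ => p /setDP[pF]; rewrite inE => pS.
  by case/andP: (tree_endpoints trF pF); rewrite inE pS.
have W3 : 3 <= #|W| by rewrite -[X in X <= _]S3 subset_leq_card.
rewrite (cardsDS SW) S3 in fromWS.
have {}fromWS := leq_trans fromWS (leq_mul (leqnn (#|W| - 3)) k2).
have := cardsID [set p | p.1 \in S] F; case/treeP: trF => _ _ _ _ [_ ->].
move: fromS fromWS W3; move: #|F :&: _| #|F :\: _| #|W| => a b w.
lia.
Qed.

Lemma px3_triangle_join :
  16 < n -> px3 [set: V] triangle_join = px3 triangle triangle_join + 1.
Proof.
move=> n17; have [_ leD] := px3_spec has_3proper_triangle.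
have [/existsP[c cG] _] :=
  px3_spec (has_3proper_connected triangle_join_simple.1 triangle_join_connected).
have := triangle_join_colours_gt2 n17 cG.
have := px3_dominating_le triangle_join_simple triangle_dominating triangle_connected.
lia.
Qed.

End TriangleJoin.

Theorem theorem3p4 :
  (forall (T : finType) (e : rel T) (D : {set T}),
      simple_graph e ->
      connectedb [set: T] e ->
      min_degree_ge e 3 ->
      three_dominating e D ->
      connectedb D e ->
      px3 [set: T] e <= px3 D e + 1) /\
  (exists (T : finType) (e : rel T) (D : {set T}),
      simple_graph e /\ connectedb [set: T] e /\ min_degree_ge e 3 /\
      three_dominating e D /\ connectedb D e /\
      px3 [set: T] e = px3 D e + 1).
Proof.
split=> [T e D eG _ _ dom Dconn|]; first exact: px3_dominating_le.
exists (join_vertex 17), (@triangle_join 17), (@triangle 17).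
split; first exact: triangle_join_simple.
split; first exact: triangle_join_connected.
split; first exact: triangle_join_min_degree.
split; first exact: triangle_dominating.
split; first exact: triangle_connected.
exact: px3_triangle_join.
Qed.
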